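(* Let $U$ be a commutative supertropical monoid with $M:=eU$. (i) The supertropical monoid $\hat U:=U/E(U,D(U))$ is a semiring. (ii) The ideal compression $\sigma_U:=\pi_{E(U,D(U))}:U\to\hat U$ is universal among all fiber contractions $\alpha:U\to V$ with $V$ a semiring: given such a fiber contraction $\alpha$, there is a unique fiber contraction $\beta:\hat U\to V$ with $\alpha=\beta\circ\sigma_U$ (and if $\alpha$ is a fiber contraction over $M$, so is $\beta$).
   Context: All monoids are commutative. A supertropical monoid is a monoid $(U,\cdot)$ with absorbing element $0$ and distinguished idempotent $e$ with $ex=0\Rightarrow x=0$, together with a total ordering on $M:=eU$, compatible with multiplication and with $0$ least, making $M$ a bipotent semiring (addition $=\max$). Define on $U$: $x+y:=y$ if $ex<ey$, $x$ if $ex>ey$, $ex$ if $ex=ey$; $U$ is a semiring if this addition is associative and distributive. A transmission $\alpha:U\to V$ is a map with $\alpha(0)=0$, $\alpha(1)=1$, multiplicative, $\alpha(e_U)=e_V$, order-preserving on $eU$. A fiber contraction is a surjective transmission whose restriction $eU\to eV$ is an isomorphism; over $M$ if $eV=M$ and that restriction is $\mathrm{id}_M$. An element $x\in U$ is an NC-product if there exist $y,z\in U$ and $y'\in M$ with $x=yz$, $y'<ey$, $y'z=eyz$; $D_0(U)$ is the set of NC-products and $D(U):=D_0(U)\cup M$ (an ideal of $U$ containing $M$). $E(U,D(U))$ is the equivalence relation: $x\sim y$ iff $x=y$, or $x,y\in D(U)$ and $ex=ey$; it is a TE-relation and $U/E(U,D(U))$ carries the unique supertropical monoid structure making the projection $\pi_{E(U,D(U))}$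 a transmission, with ghost ideal identified with $M$. *)

From Stdlib Require Import ClassicalEpsilon.

Set Implicit Arguments.
Unset Strict Implicit.

(* A (commutative) supertropical monoid.  The total order is only required
   (and only meaningful) on the ghost ideal M = eU = {x | e x = x}. *)
Record STM := {
  car :> Type;
  smul : car -> car -> car;
  sone : car;
  szero : car;
  se : car;
  sle : car -> car -> Prop;
  smulA : forall x y z, smul x (smul y z) = smul (smul x y) z;
  smulC : forall x y, smul x y = smul y x;
  smul1 : forall x, smul sone x = x;
  smul0 : forall x, smul szero x = szero;
  se_idem : smul se se = se;
  se_faith : forall x, smul se x = szero -> x = szero;
  sle_refl : forall a, smul se a = a -> sle a a;
  sle_antisym : forall a b, smul se a = a -> smul se b = b ->
      sle a b -> sle b a -> a = b;
  sle_trans : forall a b c, smul se a = a -> smul se b = b -> smul se c = c ->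
      sle a b -> sle b c -> sle a c;
  sle_total : forall a b, smul se a = a -> smul se b = b -> sle a b \/ sle b a;
  sle_mul : forall a b c, smul se a = a -> smul se b = b -> smul se c = c ->
      sle a b -> sle (smul a c) (smul b c);
  sle_0 : forall a, smul se a = a -> sle szero a
}.

Arguments smul {s} _ _.
Arguments sone {s}.
Arguments szero {s}.
Arguments se {s}.
Arguments sle {s} _ _.

Definition ghost (U : STM) (x : U) : Prop := smul se x = x.

Definition slt (U : STM) (a b : U) : Prop := sle a b /\ a <> b.

Definition sadd (U : STM) (x y : U) : U :=
  if excluded_middle_informative (slt (smul se x) (smul se y)) then y
  else if excluded_middle_informative (slt (smul se y) (smul se x)) then x
  else smul se x.

Definition is_semiring (U : STM) : Prop :=
  (forall x y z : U, sadd x (sadd y z) = sadd (sadd x y) z) /\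
  (forall x y z : U, smul x (sadd y z) = sadd (smul x y) (smul x z)).

Definition transmission (U V : STM) (a : U -> V) : Prop :=
  a szero = szero /\ a sone = sone /\
  (forall x y : U, a (smul x y) = smul (a x) (a y)) /\
  a se = se /\
  (forall x y : U, ghost x -> ghost y -> sle x y -> sle (a x) (a y)).

(* fiber contractions: surjective transmissions whose restriction
   eU -> eV is an isomorphism (of totally ordered monoids / bipotent
   semirings): bijective and an order isomorphism *)
Definition fiber_contraction (U V : STM) (a : U -> V) : Prop :=
  transmission a /\
  (forall v : V, exists u : U, a u = v) /\
  (forall x y : U, ghost x -> ghost y -> a x = a y -> x = y) /\
  (forall w : V, ghost w -> exists x : U, ghost x /\ a x = w) /\
  (forall x y : U, ghost x -> ghost y -> (sle x y <-> sle (a x) (a y))).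

Definition NC_product (U : STM) (x : U) : Prop :=
  exists (y z y' : U), x = smul y z /\ ghost y' /\ slt y' (smul se y) /\
    smul y' z = smul (smul se y) z.

Definition D (U : STM) (x : U) : Prop := NC_product x \/ ghost x.

Definition E_UD (U : STM) (x y : U) : Prop :=
  x = y \/ (D x /\ D y /\ smul se x = smul se y).

(* (Uh, sigma) presents the quotient U / E(U,D(U)) with its supertropical
   structure making the projection a transmission: sigma is a surjective
   transmission whose fibres are exactly the E(U,D(U))-classes. *)
Definition is_ideal_compression (U Uh : STM) (sigma : U -> Uh) : Prop :=
  transmission sigma /\
  (forall w : Uh, exists x : U, sigma x = w) /\
  (forall x y : U, sigma x = sigma y <-> E_UD x y).

(* The supertropical addition is always associative, and it is distributive
   as soon as ties are ghost: whenever ey < ez and e(xy) = e(xz), the product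
   xz lies in M.  For ey < ez such a product xz is an NC-product (witness
   y' := ey), so E(U,D(U)) identifies it with its ghost e(xz); hence
   U/E(U,D(U)) is a semiring.  Conversely, in a semiring V every NC-product yz
   is ghost, since y = y' + y gives zy = zy' + zy with zy' = e(zy).  A fiber
   contraction U -> V maps NC-products to NC-products, so it is constant on
   the classes of E(U,D(U)) and factors uniquely through the compression. *)

From Stdlib Require Import ClassicalEpsilon.

Set Implicit Arguments.

Lemma factor_through_surjection (A B C : Type) (s : A -> B) (f : A -> C) :
  (forall b, exists a, s a = b) -> (forall a a', s a = s a' -> f a = f a') ->
  exists g : B -> C, forall a, g (s a) = f a.
Proof.
  intros s_onto f_const.
  exists (fun b => f (proj1_sig (constructive_indefinite_description _ (s_onto b)))).
  intro a; apply f_const.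
  exact (proj2_sig (constructive_indefinite_description _ (s_onto (s a)))).
Qed.

Section Supertropical.
Variable U : STM.
Implicit Types x y z a b c : U.

Lemma ghost_e x : ghost (smul se x).
Proof. unfold ghost; rewrite smulA, se_idem; reflexivity. Qed.

Lemma e_mul x y : smul (smul se x) y = smul se (smul x y).
Proof. rewrite smulA; reflexivity. Qed.

Lemma mul_e x y : smul x (smul se y) = smul se (smul x y).
Proof. rewrite smulC, e_mul, (smulC y x); reflexivity. Qed.

Lemma e_mul_e x y : smul (smul se x) (smul se y) = smul se (smul x y).
Proof. rewrite e_mul, mul_e, ghost_e; reflexivity. Qed.

Lemma slt_irrefl a : ~ slt a a.
Proof. intros [_ ne]; exact (ne eq_refl). Qed.

Lemma slt_asym a b : ghost a -> ghost b -> slt a b -> slt b a -> False.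
Proof. intros ga gb [hab ne] [hba _]; exact (ne (sle_antisym ga gb hab hba)). Qed.

Lemma slt_trans a b c : ghost a -> ghost b -> ghost c -> slt a b -> slt b c -> slt a c.
Proof.
  intros ga gb gc [hab _] hbc; split.
  - exact (sle_trans ga gb gc hab (proj1 hbc)).
  - intros <-; exact (proj2 hbc (sle_antisym gb ga (proj1 hbc) hab)).
Qed.

Lemma slt_trichotomy a b : ghost a -> ghost b -> slt a b \/ a = b \/ slt b a.
Proof.
  intros ga gb; destruct (excluded_middle_informative (a = b)) as [|ne]; auto.
  destruct (sle_total ga gb); [left | right; right]; split; auto.
Qed.

Lemma sadd_lt x y : slt (smul se x) (smul se y) -> sadd x y = y.
Proof. intro h; unfold sadd; destruct excluded_middle_informative; tauto. Qed.

Lemma sadd_gt x y : slt (smul se y) (smul se x) -> sadd x y = x.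
Proof.
  intro h; unfold sadd; destruct excluded_middle_informative as [h'|].
  - destruct (slt_asym (ghost_e _) (ghost_e _) h h').
  - destruct excluded_middle_informative; tauto.
Qed.

Lemma sadd_eq x y : smul se x = smul se y -> sadd x y = smul se x.
Proof.
  intro h; unfold sadd; rewrite h.
  destruct excluded_middle_informative as [l|]; [destruct (slt_irrefl l) | reflexivity].
Qed.

Lemma sadd_comm x y : sadd x y = sadd y x.
Proof.
  destruct (slt_trichotomy (ghost_e x) (ghost_e y)) as [h|[h|h]].
  - rewrite sadd_lt, sadd_gt; auto.
  - rewrite !sadd_eq; auto.
  - rewrite sadd_gt, sadd_lt; auto.
Qed.

Local Ltac eval_sadd := repeat match goal with
  | |- context [sadd ?a ?b] => first
     [ rewrite (@sadd_lt a b) by (rewrite ?ghost_e; congruence)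
     | rewrite (@sadd_gt a b) by (rewrite ?ghost_e; congruence)
     | rewrite (@sadd_eq a b) by (rewrite ?ghost_e; congruence) ] end.

Local Ltac refute_cyclic_order := exfalso;
  repeat match goal with h : smul se ?a = smul se ?b |- _ => rewrite h in *; clear h end;
  first [ eapply slt_irrefl; eassumption
        | eapply slt_asym; [apply ghost_e | apply ghost_e | eassumption | eassumption]
        | eapply slt_irrefl; eapply slt_trans; [ | | | eassumption | eassumption ]; apply ghost_e
        | eapply slt_asym;
            [ | | eapply slt_trans; [ | | | eassumption | eassumption ] | eassumption ];
          apply ghost_e ].

(* Case analysis on the relative position of ex, ey, ez: in each of the 27
   cases every [sadd] evaluates, or the case is a cyclic order and absurd. *)
Lemma sadd_assoc x y z : sadd x (sadd y z) = sadd (sadd x y) z.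
Proof.
  destruct (slt_trichotomy (ghost_e x) (ghost_e y)) as [|[|]];
  destruct (slt_trichotomy (ghost_e y) (ghost_e z)) as [|[|]];
  destruct (slt_trichotomy (ghost_e x) (ghost_e z)) as [|[|]];
  eval_sadd; first [ rewrite ?ghost_e; congruence | refute_cyclic_order ].
Qed.

Lemma sle_e_mul x y z :
  sle (smul se y) (smul se z) -> sle (smul se (smul x y)) (smul se (smul x z)).
Proof.
  intro h; rewrite <- !e_mul_e, !(smulC (smul se x)).
  apply sle_mul; [apply ghost_e.. | exact h].
Qed.

Definition ghost_ties : Prop :=
  forall x y z, slt (smul se y) (smul se z) ->
    smul se (smul x y) = smul se (smul x z) -> ghost (smul x z).

Lemma sadd_mul_dominant x y z : ghost_ties -> slt (smul se y) (smul se z) ->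
  sadd (smul x y) (smul x z) = smul x z.
Proof.
  intros ties hyz.
  destruct (slt_trichotomy (ghost_e (smul x y)) (ghost_e (smul x z))) as [h|[h|h]].
  - apply sadd_lt; exact h.
  - rewrite sadd_eq by exact h; rewrite h; exact (ties x y z hyz h).
  - destruct h as [h ne]; exfalso; apply ne.
    apply sle_antisym; [apply ghost_e | apply ghost_e | exact h | apply sle_e_mul, hyz].
Qed.

Lemma semiring_of_ghost_ties : ghost_ties -> is_semiring U.
Proof.
  intro ties; split; [exact sadd_assoc|]; intros x y z.
  destruct (slt_trichotomy (ghost_e y) (ghost_e z)) as [h|[h|h]].
  - rewrite sadd_lt by exact h; symmetry; apply sadd_mul_dominant; auto.
  - rewrite !sadd_eq, mul_e; rewrite <- ?mul_e; congruence.
  - rewrite sadd_gt, sadd_comm by exact h; symmetry; apply sadd_mul_dominant; auto.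
Qed.

Lemma semiring_NC_product_ghost x : is_semiring U -> NC_product x -> ghost x.
Proof.
  intros [_ distr] (y & z & y' & -> & gy' & hlt & hy'z).
  assert (split_y : sadd y' y = y) by (apply sadd_lt; rewrite gy'; exact hlt).
  assert (tie : smul z y' = smul se (smul z y)) by (rewrite smulC, hy'z, e_mul, (smulC y z); reflexivity).
  rewrite smulC; unfold ghost; rewrite <- split_y at 2.
  rewrite distr, sadd_eq; rewrite tie, ?ghost_e; reflexivity.
Qed.

End Supertropical.

Section FiberContraction.
Variables U V : STM.
Implicit Types x y a b : U.

Lemma transmission_e (f : U -> V) x : transmission f -> f (smul se x) = smul se (f x).
Proof. intros (_ & _ & fmul & fe & _); rewrite fmul, fe; reflexivity. Qed.

Lemma transmission_mul (f : U -> V) x y :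
  transmission f -> f (smul x y) = smul (f x) (f y).
Proof. intros (_ & _ & fmul & _); apply fmul. Qed.

Lemma transmission_sle (f : U -> V) a b :
  transmission f -> ghost a -> ghost b -> sle a b -> sle (f a) (f b).
Proof. intros (_ & _ & _ & _ & fmono); apply fmono. Qed.

Lemma transmission_ghost (f : U -> V) x : transmission f -> ghost x -> ghost (f x).
Proof. intros tf gx; unfold ghost; rewrite <- transmission_e, gx; auto. Qed.

Variable alpha : U -> V.
Hypothesis alpha_fc : fiber_contraction alpha.

Let alpha_tr : transmission alpha := proj1 alpha_fc.

Lemma fiber_contraction_slt a b : ghost a -> ghost b -> slt a b <-> slt (alpha a) (alpha b).
Proof.
  pose proof alpha_fc as (_ & _ & inj & _ & iso); intros ga gb.
  split; intros [h ne]; split.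
  - apply iso; auto.
  - intro e; exact (ne (inj a b ga gb e)).
  - apply iso; auto.
  - intros <-; exact (ne eq_refl).
Qed.

Lemma fiber_contraction_NC_product x : NC_product x -> NC_product (alpha x).
Proof.
  intros (y & z & y' & -> & gy' & hlt & hy'z).
  exists (alpha y), (alpha z), (alpha y'); split; [|split; [|split]].
  - apply transmission_mul, alpha_tr.
  - exact (transmission_ghost alpha_tr gy').
  - rewrite <- transmission_e by exact alpha_tr.
    exact (proj1 (fiber_contraction_slt gy' (ghost_e _ y)) hlt).
  - rewrite <- transmission_e, <- !transmission_mul, hy'z by exact alpha_tr.
    reflexivity.
Qed.

Lemma fiber_contraction_D_ghost x : is_semiring V -> D x -> ghost (alpha x).
Proof.
  intros Vsr [nc | gx].
  - exact (semiring_NC_product_ghost Vsr (fiber_contraction_NC_product nc)).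
  - exact (transmission_ghost alpha_tr gx).
Qed.

Lemma fiber_contraction_E_UD x y : is_semiring V -> E_UD x y -> alpha x = alpha y.
Proof.
  intros Vsr [<- | (Dx & Dy & exy)]; [reflexivity|].
  rewrite <- (fiber_contraction_D_ghost Vsr Dx), <- (fiber_contraction_D_ghost Vsr Dy).
  rewrite <- !transmission_e, exy by exact alpha_tr; reflexivity.
Qed.

Lemma fiber_contraction_factor (W : STM) (sigma : U -> W) (beta : W -> V) :
  fiber_contraction sigma -> (forall x, beta (sigma x) = alpha x) -> fiber_contraction beta.
Proof.
  intros sigma_fc hb.
  destruct sigma_fc as [sigma_tr [sonto [_ [slift siso]]]].
  destruct sigma_tr as (s0 & s1 & smul_s & se_s & _).
  pose proof alpha_fc as [(a0 & a1 & amul & ae & amono) [aonto [ainj [alift aiso]]]].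
  split; [split; [|split; [|split; [|split]]] | split; [|split; [|split]]].
  - rewrite <- s0, hb; exact a0.
  - rewrite <- s1, hb; exact a1.
  - intros w1 w2; destruct (sonto w1) as [x1 <-], (sonto w2) as [x2 <-].
    rewrite <- smul_s, !hb; apply amul.
  - rewrite <- se_s, hb; exact ae.
  - intros w1 w2 g1 g2 h.
    destruct (slift w1 g1) as [x1 [gx1 <-]], (slift w2 g2) as [x2 [gx2 <-]].
    rewrite !hb; apply amono, siso; auto.
  - intro v; destruct (aonto v) as [x <-]; exists (sigma x); apply hb.
  - intros w1 w2 g1 g2.
    destruct (slift w1 g1) as [x1 [gx1 <-]], (slift w2 g2) as [x2 [gx2 <-]].
    rewrite !hb; intro e; rewrite (ainj x1 x2 gx1 gx2 e); reflexivity.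
  - intros v gv; destruct (alift v gv) as [x [gx <-]].
    exists (smul se (sigma x)); split; [apply ghost_e|].
    rewrite <- se_s, <- smul_s, hb, gx; reflexivity.
  - intros w1 w2 g1 g2.
    destruct (slift w1 g1) as [x1 [gx1 <-]], (slift w2 g2) as [x2 [gx2 <-]].
    rewrite !hb, <- siso, aiso by auto; reflexivity.
Qed.

End FiberContraction.

Section IdealCompression.
Variables U Uh : STM.
Variable sigma : U -> Uh.
Hypothesis sigma_ic : is_ideal_compression sigma.

Let sigma_tr : transmission sigma := proj1 sigma_ic.
Let sigma_onto : forall w, exists x, sigma x = w := proj1 (proj2 sigma_ic).
Let sigma_fibres : forall x y, sigma x = sigma y <-> E_UD x y := proj2 (proj2 sigma_ic).

Lemma ideal_compression_ghost_inj a b : ghost a -> ghost b -> sigma a = sigma b -> a = b.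
Proof.
  intros ga gb e; apply sigma_fibres in e.
  destruct e as [e | (_ & _ & e)]; [exact e | unfold ghost in *; congruence].
Qed.

Lemma ideal_compression_sle a b : ghost a -> ghost b -> sle a b <-> sle (sigma a) (sigma b).
Proof.
  intros ga gb; split; [exact (transmission_sle sigma_tr ga gb)|]; intro h.
  destruct (sle_total ga gb) as [hab | hba]; [exact hab|].
  assert (gsa := transmission_ghost sigma_tr ga); assert (gsb := transmission_ghost sigma_tr gb).
  replace b with a; [apply sle_refl, ga|].
  apply ideal_compression_ghost_inj, sle_antisym; auto.
  exact (transmission_sle sigma_tr gb ga hba).
Qed.

Lemma ideal_compression_fiber_contraction : fiber_contraction sigma.
Proof.
  split; [exact sigma_tr | split; [exact sigma_onto | split; [|split]]].
  - exact ideal_compression_ghost_inj.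
  - intros w gw; destruct (sigma_onto w) as [x <-].
    exists (smul se x); split; [apply ghost_e | rewrite transmission_e; [exact gw | exact sigma_tr]].
  - exact ideal_compression_sle.
Qed.

Lemma ideal_compression_ghost_ties : ghost_ties Uh.
Proof.
  intros u v w hlt heq.
  destruct (sigma_onto u) as [x <-], (sigma_onto v) as [y <-], (sigma_onto w) as [z <-].
  rewrite <- !transmission_e in hlt by exact sigma_tr.
  apply (fiber_contraction_slt ideal_compression_fiber_contraction (ghost_e _ y) (ghost_e _ z))
    in hlt.
  rewrite <- !transmission_mul in heq by exact sigma_tr.
  rewrite <- (transmission_e (smul x y) sigma_tr), <- (transmission_e (smul x z) sigma_tr) in heq.
  apply ideal_compression_ghost_inj in heq; [|apply ghost_e ..].
  assert (NC_xz : NC_product (smul x z)).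
  { exists z, x, (smul se y); split; [apply smulC | split; [apply ghost_e | split; [exact hlt|]]].
    rewrite !e_mul, (smulC y x), (smulC z x); exact heq. }
  rewrite <- transmission_mul by exact sigma_tr.
  unfold ghost; rewrite <- transmission_e by exact sigma_tr.
  apply sigma_fibres; right; split; [right; apply ghost_e | split; [left; exact NC_xz|]].
  apply ghost_e.
Qed.

Lemma ideal_compression_semiring : is_semiring Uh.
Proof. exact (semiring_of_ghost_ties ideal_compression_ghost_ties). Qed.

End IdealCompression.

Theorem theorem4p5 (U Uh : STM) (sigma : U -> Uh) :
  is_ideal_compression sigma ->
  (* (i) *)
  is_semiring Uh /\
  (* (ii) *)
  (forall (V : STM) (alpha : U -> V),
     is_semiring V -> fiber_contraction alpha ->
     exists beta : Uh -> V,
       fiber_contraction beta /\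
       (forall x : U, alpha x = beta (sigma x)) /\
       (forall beta' : Uh -> V,
          fiber_contraction beta' -> (forall x : U, alpha x = beta' (sigma x)) ->
          forall w : Uh, beta' w = beta w) /\
       (* "over M": with eV identified with M via iota (and e(Uh) identified
          with M via sigma), if alpha is over M then so is beta *)
       (forall iota : U -> V,
          (forall x : U, ghost x -> alpha x = iota x) ->
          forall x : U, ghost x -> beta (sigma x) = iota x)).
Proof.
  intros sigma_ic; split; [exact (ideal_compression_semiring sigma_ic)|].
  intros V alpha Vsr alpha_fc.
  pose proof sigma_ic as [_ [sigma_onto sigma_fibres]].
  destruct (factor_through_surjection sigma alpha sigma_onto) as [beta hb].
  { intros x y e; apply (fiber_contraction_E_UD alpha_fc Vsr), sigma_fibres, e. }
  exists beta; split; [|split; [|split]].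
  - exact (fiber_contraction_factor alpha_fc beta (ideal_compression_fiber_contraction sigma_ic) hb).
  - intro x; symmetry; apply hb.
  - intros beta' _ hb' w; destruct (sigma_onto w) as [x <-].
    rewrite hb, <- hb'; reflexivity.
  - intros iota hiota x gx; rewrite hb; exact (hiota x gx).
Qed.
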